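(* Let $n_h\ge1$, $n_o\ge 2$, $n=n_o+n_h-1$, and let $A^{m(n)T}$, $G^{m(n)}$, $B^{m(n)T}$ be the modified Toom-Cook matrices built from $A^{(n-1)T}$, $G^{(n-1)}$, $B^{(n-1)T}$ as in the context. For $h\in F^{n_h}$, $x\in F^n$ let $s^{m(n)}=A^{m(n)T}(G^{m(n)}h\odot B^{m(n)T}x)$ be the exact value, $\hat s^{m(n)}$ the floating point value computed as in the context, and $x^{(n-1)}=(x_1,\dots,x_{n-1})^T$. Then for $q=1,\dots,n_o-1$, $$|\hat s^{m(n)}_q-s^{m(n)}_q|\le |A^{(n-1)T}_{q,:}|\big(|G^{(n-1)}|\,|h|\odot|B^{(n-1)T}|\,|x^{(n-1)}|\big)\big(\gamma^{(n_h)}+\beta^{(n-1)}+\alpha^{(n-1)}+1\big)\varepsilon+O(\varepsilon^2),$$ and for $q=n_o$, $$|\hat s^{m(n)}_{n_o}-s^{m(n)}_{n_o}|\le\Big(|A^{(n-1)T}_{n_o,:}|\big(|G^{(n-1)}|\,|h|\odot|B^{(n-1)T}|\,|x^{(n-1)}|\big)+|h_{n_h}|\,|B^{m(n)T}_{n,:}|\,|x|\Big)\Big(\max\{\gamma^{(n_h)}+\beta^{(n-1)}+\alpha^{(n-1)}+1,\ \beta^{(n)}+1\}+1\Big)\varepsilon+O(\varepsilon^2).$$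
   Context: Let $p_1,\dots,p_{n-1}$ be distinct reals, $N_i=1/\prod_{j\ne i,\,j\le n-1}(p_i-p_j)$, $M_{i,j}$ the coefficient of $a^{j-1}$ in $\prod_{k\ne i,\,k\le n-1}(a-p_k)$, and $M_j$ ($j=1,\dots,n$) the coefficient of $a^{j-1}$ in $\prod_{k=1}^{n-1}(a-p_k)$ (so $M_n=1$). Define $A^{(n-1)T}\in\mathbb{R}^{n_o\times(n-1)}$ by $A^{(n-1)T}_{i,j}=p_j^{i-1}$, $G^{(n-1)}\in\mathbb{R}^{(n-1)\times n_h}$ by $G^{(n-1)}_{i,j}=p_i^{j-1}N_i$, $B^{(n-1)T}\in\mathbb{R}^{(n-1)\times(n-1)}$ by $B^{(n-1)T}_{i,j}=M_{j,i}$. The modified matrices are: $G^{m(n)}\in\mathbb{R}^{n\times n_h}$ equals $G^{(n-1)}$ with an appended last row $(0,\dots,0,1)$; $A^{m(n)T}\in\mathbb{R}^{n_o\times n}$ equals $A^{(n-1)T}$ with an appended last column $(0,\dots,0,1)^T$; $B^{m(n)T}\in\mathbb{R}^{n\times n}$ has upper-left block $B^{(n-1)T}$, last column zero in rows $1,\dots,n-1$, and last row $(M_1,\dots,M_n)$. $M_{q,:}$ denotes row $q$ of a matrix $M$. Floating point model: set $F$, unit roundoff $\varepsilon$, no overflow, $fl(y\,\mathrm{op}\,z)=(y\,\mathrm{op}\,z)(1+\delta)$, $fl(y)=y(1+\delta)$, $|\delta|\le\varepsilon$; matrix entries stored rounded. Computation: $u=fl(fl(G^{(n-1)})h)$, $v=fl(fl(B^{(n-1)T})x^{(n-1)})$,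 $w_i=fl(u_iv_i)$ ($i\le n-1$); for $q<n_o$, $\hat s^{m(n)}_q=fl(fl(A^{(n-1)T}_{q,:})w)$; for $q=n_o$, $\hat s^{m(n)}_{n_o}=fl\big(fl(fl(A^{(n-1)T}_{n_o,:})w)+fl(h_{n_h}\,fl(fl(B^{m(n)T}_{n,:})x))\big)$ (structural zeros and ones are not multiplied). Constants: $\gamma^{(n_h)}$, $\beta^{(n-1)}$, $\alpha^{(n-1)}$, $\beta^{(n)}$ are such that for every row $a^T$ of $G^{(n-1)}$, of $B^{(n-1)T}$, of $A^{(n-1)T}$, and for the row $B^{m(n)T}_{n,:}$ respectively, and every floating point vector $y$ of matching length, $|a^Ty-fl(fl(a^T)y)|\le |a^T||y|\,c\,\varepsilon+O(\varepsilon^2)$ with the respective $c$. $|\cdot|$ is entrywise absolute value, $\odot$ the Hadamard product. *)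

From HB Require Import structures.
From mathcomp Require Import all_boot all_order all_algebra.
Set Implicit Arguments. Unset Strict Implicit. Unset Printing Implicit Defensive.
Import Order.TTheory GRing.Theory Num.Theory.
Local Open Scope ring_scope.

(* Points p_1..p_{m} with m = n-1, indexed by 'I_m (0-based). *)

Definition TC_N (R : fieldType) (m : nat) (p : 'I_m -> R) (i : 'I_m) : R :=
  (\prod_(j < m | j != i) (p i - p j))^-1.

(* prod_{k<>i} (a - p_k) ; its coefficient of a^j (0-based) is M_{i+1,j+1} *)
Definition TC_Mi (R : fieldType) (m : nat) (p : 'I_m -> R) (i : 'I_m) : {poly R} :=
  \prod_(k < m | k != i) ('X - (p k)%:P).

(* prod_k (a - p_k) ; its coefficient of a^j (0-based) is M_{j+1} *)
Definition TC_Mfull (R : fieldType) (m : nat) (p : 'I_m -> R) : {poly R} :=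
  \prod_(k < m) ('X - (p k)%:P).

Definition TC_AT (R : fieldType) (no m : nat) (p : 'I_m -> R) : 'M[R]_(no, m) :=
  \matrix_(i < no, j < m) p j ^+ i.

Definition TC_G (R : fieldType) (nh m : nat) (p : 'I_m -> R) : 'M[R]_(m, nh) :=
  \matrix_(i < m, j < nh) (p i ^+ j * TC_N p i).

Definition TC_BT (R : fieldType) (m : nat) (p : 'I_m -> R) : 'M[R]_m :=
  \matrix_(i < m, j < m) (TC_Mi p j)`_i.

(* A^{m(n)T}: A^{(n-1)T} with appended last column (0,...,0,1)^T *)
Definition TC_ATm (R : fieldType) (no m : nat) (p : 'I_m -> R) : 'M[R]_(no, m.+1) :=
  \matrix_(i < no, j < m.+1)
    match unlift ord_max j with
    | Some j' => TC_AT no p i j'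
    | None => (((i : nat) == no.-1) : nat)%:R
    end.

(* G^{m(n)}: G^{(n-1)} with appended last row (0,...,0,1) *)
Definition TC_Gm (R : fieldType) (nh m : nat) (p : 'I_m -> R) : 'M[R]_(m.+1, nh) :=
  \matrix_(i < m.+1, j < nh)
    match unlift ord_max i with
    | Some i' => TC_G nh p i' j
    | None => (((j : nat) == nh.-1) : nat)%:R
    end.

(* B^{m(n)T}: upper-left block B^{(n-1)T}, last column zero in rows 1..n-1,
   last row (M_1, ..., M_n) *)
Definition TC_BTm (R : fieldType) (m : nat) (p : 'I_m -> R) : 'M[R]_(m.+1) :=
  \matrix_(i < m.+1, j < m.+1)
    match unlift ord_max i, unlift ord_max j with
    | Some i', Some j' => TC_BT p i' j'
    | Some _, None => 0
    | None, _ => (TC_Mfull p)`_j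
    end.

Definition hadc (R : pzRingType) (k : nat) (a b : 'cV[R]_k) : 'cV[R]_k :=
  \col_i (a i 0 * b i 0).

Definition TC_exact (R : fieldType) (no nh m : nat) (p : 'I_m -> R)
    (h : 'cV[R]_nh) (x : 'cV[R]_(m.+1)) : 'cV[R]_no :=
  TC_ATm no p *m hadc (TC_Gm nh p *m h) (TC_BTm p *m x).

Definition xtrunc (R : Type) (m : nat) (x : 'cV[R]_(m.+1)) : 'cV[R]_m :=
  \col_i x (widen_ord (leqnSn m) i) 0.

Definition absm (R : numDomainType) (k l : nat) (A : 'M[R]_(k, l)) : 'M[R]_(k, l) :=
  map_mx (fun a => `|a|) A.

(* The floating point dot product  fl(fl(a^T) y)  is modelled by an abstract
   function fdot (its algorithm is left unspecified, as in the paper: only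
   the error constants are used). *)
Definition fdot_type (R : Type) := forall k : nat, 'rV[R]_k -> 'cV[R]_k -> R.

Definition TC_w (R : fieldType) (fdot : fdot_type R) (fl_mul : R -> R -> R)
    (nh m : nat) (p : 'I_m -> R) (h : 'cV[R]_nh) (x : 'cV[R]_(m.+1)) : 'cV[R]_m :=
  \col_i fl_mul (fdot _ (row i (TC_G nh p)) h) (fdot _ (row i (TC_BT p)) (xtrunc x)).

(* hat s^{m(n)}_q  (hl is the index n_h, i.e. value nh-1 in 0-based 'I_nh) *)
Definition TC_shat (R : fieldType) (fdot : fdot_type R) (fl_mul fl_add : R -> R -> R)
    (no nh m : nat) (p : 'I_m -> R) (h : 'cV[R]_nh) (x : 'cV[R]_(m.+1))
    (hl : 'I_nh) (q : 'I_no) : R :=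
  let w := TC_w fdot fl_mul p h x in
  if ((q : nat) < no.-1)%N then fdot _ (row q (TC_AT no p)) w
  else fl_add (fdot _ (row q (TC_AT no p)) w)
              (fl_mul (h hl 0) (fdot _ (row ord_max (TC_BTm p)) x)).

Definition dot_err_bound (R : numDomainType) (F : R -> Prop) (fdot : fdot_type R)
    (eps K c : R) (k : nat) (a : 'rV[R]_k) : Prop :=
  forall y : 'cV[R]_k, (forall j, F (y j 0)) ->
    `|(a *m y) 0 0 - fdot k a y| <= (absm a *m absm y) 0 0 * (c * eps + K * eps ^+ 2).

Definition TC_mainterm (R : realFieldType) (no nh m : nat) (p : 'I_m -> R)
    (h : 'cV[R]_nh) (x : 'cV[R]_(m.+1)) (q : 'I_no) : R :=
  (absm (row q (TC_AT no p)) *m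
     hadc (absm (TC_G nh p) *m absm h) (absm (TC_BT p) *m absm (xtrunc x))) 0 0.

From mathcomp Require Import all_boot all_order all_algebra.
From mathcomp Require Import lra ring.
Import Order.TTheory GRing.Theory Num.Theory.
Set Implicit Arguments. Unset Strict Implicit. Unset Printing Implicit Defensive.
Local Open Scope ring_scope.

(* Because of the block structure of the modified matrices, the exact output is
   A^{(n-1)T}_{q,:} (G^{(n-1)} h .* B^{(n-1)T} x^{(n-1)}), plus h_{n_h} B^{m(n)T}_{n,:} x
   in the last row only.  Every floating point stage replaces a quantity z with
   |z| <= Z by some z' with |z' - z| <= Z e, and such relative errors compose as
   (1 + e1)(1 + e2) - 1, the final addition contributing the larger of the errors
   of its two summands.  Each elementary relative error is c eps + O(eps^2), and
   composition adds the first order coefficients while the cross terms are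
   O(eps^2): this yields gamma + beta + alpha + 1 and max{..., beta^(n) + 1} + 1. *)

Section RelativeErrors.
Variable R : realFieldType.

(* [1 + err_comp e1 e2 = (1 + e1) * (1 + e2)]: relative errors compose multiplicatively. *)
Definition err_comp (e1 e2 : R) : R := e1 + e2 + e1 * e2.

Lemma approx_norm_le (y z Z e : R) :
  `|z| <= Z -> `|y - z| <= Z * e -> `|y| <= Z * (1 + e).
Proof.
move=> zZ yz; rewrite mulrDr mulr1 -(subrK z y) addrC.
by apply: le_trans (ler_normD _ _) _; apply: lerD.
Qed.

Lemma approx_trans (y' y z Z e1 e2 : R) :
  `|y - z| <= Z * e1 -> `|y' - y| <= Z * (1 + e1) * e2 ->
  `|y' - z| <= Z * err_comp e1 e2.
Proof.
move=> yz y'y; rewrite -(subrKA y) /err_comp.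
have -> : Z * (e1 + e2 + e1 * e2) = Z * (1 + e1) * e2 + Z * e1 by ring.
by apply: le_trans (ler_normD _ _) _; apply: lerD.
Qed.

Lemma approx_round (fl y z Z e eps : R) : 0 <= eps ->
  `|z| <= Z -> `|y - z| <= Z * e -> `|fl - y| <= eps * `|y| ->
  `|fl - z| <= Z * err_comp e eps.
Proof.
move=> eps_ge0 zZ yz fly; apply: (approx_trans yz); apply: le_trans fly _.
by rewrite [eps * _]mulrC ler_wpM2r // (approx_norm_le zZ yz).
Qed.

Lemma approx_mul (u g v b G B e1 e2 : R) :
  `|g| <= G -> `|u - g| <= G * e1 -> `|b| <= B -> `|v - b| <= B * e2 ->
  `|u * v - g * b| <= G * B * err_comp e1 e2.
Proof.
move=> gG ug bB vb.
have -> : u * v - g * b = (u - g) * v + g * (v - b) by ring.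
have -> : G * B * err_comp e1 e2 = G * e1 * (B * (1 + e2)) + G * (B * e2).
  by rewrite /err_comp; ring.
apply: le_trans (ler_normD _ _) _; rewrite !normrM.
by apply: lerD; apply: ler_pM; rewrite ?normr_ge0 // (approx_norm_le bB vb).
Qed.

Lemma approx_add (y1 y2 z1 z2 Z1 Z2 e1 e2 : R) : 0 <= Z1 -> 0 <= Z2 ->
  `|y1 - z1| <= Z1 * e1 -> `|y2 - z2| <= Z2 * e2 ->
  `|(y1 + y2) - (z1 + z2)| <= (Z1 + Z2) * Num.max e1 e2.
Proof.
move=> Z1_ge0 Z2_ge0 yz1 yz2; rewrite opprD addrACA mulrDl.
apply: le_trans (ler_normD _ _) _; apply: lerD.
  by apply: le_trans yz1 _; rewrite ler_wpM2l // le_max lexx.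
by apply: le_trans yz2 _; rewrite ler_wpM2l // le_max lexx orbT.
Qed.

Lemma absm_ge0 k l (A : 'M[R]_(k, l)) i j : 0 <= absm A i j.
Proof. by rewrite mxE. Qed.

Lemma absm_mulmx_ge0 k l n (A : 'M[R]_(k, l)) (B : 'M[R]_(l, n)) i j :
  (forall i' j', 0 <= B i' j') -> 0 <= (absm A *m B) i j.
Proof. by move=> B_ge0; rewrite mxE sumr_ge0 // => r _; rewrite mulr_ge0 ?absm_ge0. Qed.

Lemma absm_row k l (A : 'M[R]_(k, l)) i : absm (row i A) = row i (absm A).
Proof. exact: map_row. Qed.

Lemma abs_dot k (a : 'rV[R]_k) (y : 'cV[R]_k) :
  `|(a *m y) 0 0| <= (absm a *m absm y) 0 0.
Proof.
rewrite !mxE; apply: le_trans (ler_norm_sum _ _ _) _.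
by apply: ler_sum => i _; rewrite !mxE normrM.
Qed.

Lemma absdot_le_scale k (a : 'rV[R]_k) (w Z : 'cV[R]_k) c :
  (forall i, `|w i 0| <= Z i 0 * c) -> (absm a *m absm w) 0 0 <= (absm a *m Z) 0 0 * c.
Proof.
move=> wZ; rewrite !mxE mulr_suml; apply: ler_sum => i _.
by rewrite !mxE -mulrA ler_wpM2l.
Qed.

Lemma dot_le k (a : 'rV[R]_k) (z Z : 'cV[R]_k) :
  (forall i, `|z i 0| <= Z i 0) -> `|(a *m z) 0 0| <= (absm a *m Z) 0 0.
Proof.
move=> zZ; rewrite -[leRHS]mulr1; apply: le_trans (abs_dot _ _) (absdot_le_scale _ _).
by move=> i; rewrite mulr1.
Qed.

Lemma dot_approx k (a : 'rV[R]_k) (w z Z : 'cV[R]_k) c :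
  (forall i, `|w i 0 - z i 0| <= Z i 0 * c) ->
  `|(a *m w) 0 0 - (a *m z) 0 0| <= (absm a *m Z) 0 0 * c.
Proof.
move=> wz; have -> : (a *m w) 0 0 - (a *m z) 0 0 = (a *m (w - z)) 0 0.
  by rewrite mulmxBr !mxE.
by apply: le_trans (abs_dot _ _) (absdot_le_scale _ _) => i; rewrite !mxE.
Qed.

End RelativeErrors.

Section FirstOrder.
Variable R : realFieldType.

Definition first_order_le (a : R) (f : R -> R) :=
  exists2 C, 0 <= C & forall eps, 0 <= eps <= 1 -> 0 <= f eps <= a * eps + C * eps ^+ 2.

Lemma first_order_le_id : first_order_le 1 (fun eps => eps).
Proof. by exists 0 => // eps /andP[eps_ge0 _]; rewrite mul1r mul0r addr0 eps_ge0 /=. Qed.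

Lemma first_order_le_lin (c K : R) : 0 <= c -> 0 <= K ->
  first_order_le c (fun eps => c * eps + K * eps ^+ 2).
Proof.
move=> c_ge0 K_ge0; exists K => // eps /andP[eps_ge0 _].
by rewrite lexx andbT addr_ge0 ?mulr_ge0 ?exprn_ge0.
Qed.

Lemma first_order_le_comp a b (f g : R -> R) :
  first_order_le a f -> first_order_le b g ->
  first_order_le (a + b) (fun eps => err_comp (f eps) (g eps)).
Proof.
move=> [C1 C1_ge0 hf] [C2 C2_ge0 hg].
have unit01 : (0 : R) <= 1 <= (1 : R) by rewrite ler01 lexx.
have /andP[f1_ge0 f1_le] := hf 1 unit01; have /andP[g1_ge0 g1_le] := hg 1 unit01.
rewrite expr1n !mulr1 in f1_le g1_le.
exists (C1 + C2 + (a + C1) * (b + C2)).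
  by rewrite !addr_ge0 // mulr_ge0 // (le_trans f1_ge0 f1_le, le_trans g1_ge0 g1_le).
move=> eps eps01; have /andP[eps_ge0 eps_le1] := eps01.
have /andP[f_ge0 f_le] := hf eps eps01; have /andP[g_ge0 g_le] := hg eps eps01.
have sq_le : eps ^+ 2 <= eps by rewrite expr2 ler_piMr.
(* both errors are O(eps), so their product is O(eps^2) *)
have f_lin : f eps <= (a + C1) * eps.
  by apply: (le_trans f_le); rewrite mulrDl lerD2l ler_wpM2l.
have g_lin : g eps <= (b + C2) * eps.
  by apply: (le_trans g_le); rewrite mulrDl lerD2l ler_wpM2l.
have fg_le : f eps * g eps <= (a + C1) * (b + C2) * eps ^+ 2.
  rewrite expr2 mulrACA; exact: ler_pM.
rewrite /err_comp !addr_ge0 ?mulr_ge0 //=; lra.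
Qed.

Lemma first_order_le_max a b (f g : R -> R) :
  first_order_le a f -> first_order_le b g ->
  first_order_le (Num.max a b) (fun eps => Num.max (f eps) (g eps)).
Proof.
move=> [C1 C1_ge0 hf] [C2 C2_ge0 hg]; exists (C1 + C2); first exact: addr_ge0.
move=> eps eps01; have /andP[eps_ge0 eps_le1] := eps01.
have /andP[f_ge0 f_le] := hf eps eps01; have /andP[g_ge0 g_le] := hg eps eps01.
have sq_ge0 : 0 <= eps ^+ 2 by rewrite exprn_ge0.
have : a <= Num.max a b /\ b <= Num.max a b by rewrite !le_max !lexx orbT.
case=> a_le b_le; rewrite le_max f_ge0 ge_max /=.
apply/andP; split; [apply: le_trans f_le _ | apply: le_trans g_le _]; apply: lerD;
  by rewrite ler_wpM2r // ?lerDl ?lerDr.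
Qed.

Lemma first_order_le_common a b (f g : R -> R) :
  first_order_le a f -> first_order_le b g ->
  exists C, forall eps, 0 <= eps <= 1 ->
    f eps <= a * eps + C * eps ^+ 2 /\ g eps <= b * eps + C * eps ^+ 2.
Proof.
move=> [C1 C1_ge0 hf] [C2 C2_ge0 hg]; exists (C1 + C2) => eps eps01.
have /andP[_ f_le] := hf eps eps01; have /andP[_ g_le] := hg eps eps01.
have sq_ge0 : 0 <= eps ^+ 2 by rewrite exprn_ge0 // (andP eps01).1.
split; [apply: le_trans f_le _ | apply: le_trans g_le _];
  by rewrite lerD2l ler_wpM2r // ?lerDl ?lerDr.
Qed.

End FirstOrder.

Arguments first_order_le_id {R}.

Lemma mulmx_row_entry (R : pzSemiRingType) k l n (A : 'M[R]_(k, l)) (B : 'M[R]_(l, n))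
    i j :
  (row i A *m B) 0 j = (A *m B) i j.
Proof. by rewrite -row_mul mxE. Qed.

Lemma hadcE (R : pzRingType) k (a b : 'cV[R]_k) i : hadc a b i 0 = a i 0 * b i 0.
Proof. exact: mxE. Qed.

Section ModifiedToomCook.
Variables (R : fieldType) (nh no m : nat) (p : 'I_m -> R).

Lemma lift_ord_max (i : 'I_m) : lift ord_max i = widen_ord (leqnSn m) i.
Proof. by apply: val_inj; rewrite /= /bump leqNgt ltn_ord. Qed.

Lemma TC_Gm_mul_lift (h : 'cV[R]_nh) i :
  (TC_Gm nh p *m h) (lift ord_max i) 0 = (TC_G nh p *m h) i 0.
Proof. by rewrite !mxE; apply: eq_bigr => j _; rewrite mxE liftK. Qed.

Lemma TC_Gm_mul_max (h : 'cV[R]_nh) (hl : 'I_nh) : (hl : nat) = nh.-1 ->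
  (TC_Gm nh p *m h) ord_max 0 = h hl 0.
Proof.
move=> hl_last; rewrite mxE (bigD1 hl) //= big1 => [|j j_neq].
  by rewrite mxE unlift_none hl_last eqxx mul1r addr0.
by rewrite mxE unlift_none -hl_last -[(j : nat) == hl]/(j == hl) (negbTE j_neq)
  mul0r.
Qed.

Lemma TC_BTm_mul_lift (x : 'cV[R]_m.+1) i :
  (TC_BTm p *m x) (lift ord_max i) 0 = (TC_BT p *m xtrunc x) i 0.
Proof.
rewrite !mxE big_ord_recr /= mxE liftK unlift_none mul0r addr0.
by apply: eq_bigr => j _; rewrite !mxE -lift_ord_max (liftK (ord_max : 'I_m.+1) j) liftK mxE.
Qed.

Lemma TC_exactE (h : 'cV[R]_nh) (x : 'cV[R]_m.+1) (hl : 'I_nh) (q : 'I_no) :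
  (hl : nat) = nh.-1 ->
  TC_exact no p h x q 0 =
    (row q (TC_AT no p) *m hadc (TC_G nh p *m h) (TC_BT p *m xtrunc x)) 0 0 +
    (((q : nat) == no.-1) : nat)%:R * (h hl 0 * (row ord_max (TC_BTm p) *m x) 0 0).
Proof.
move=> hl_last; rewrite /TC_exact mxE big_ord_recr /=; congr (_ + _).
  rewrite mxE; apply: eq_bigr => i _.
  rewrite -lift_ord_max [TC_ATm _ _ _ _]mxE liftK !hadcE.
  by rewrite TC_Gm_mul_lift TC_BTm_mul_lift [row _ _ _ _]mxE.
rewrite [TC_ATm _ _ _ _]mxE unlift_none hadcE (TC_Gm_mul_max h hl_last).
by rewrite -mulmx_row_entry.
Qed.

End ModifiedToomCook.

Definition dot_relerr (R : numDomainType) (K c eps : R) : R := c * eps + K * eps ^+ 2.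

(* Relative errors of the computed A^{(n-1)T}_{q,:} w and of the computed last entry. *)
Definition TC_relerr_S (R : realFieldType) (gam bet alp K eps : R) : R :=
  err_comp (err_comp (err_comp (dot_relerr K gam eps) (dot_relerr K bet eps)) eps)
    (dot_relerr K alp eps).

Definition TC_relerr_last (R : realFieldType) (gam bet alp betn K eps : R) : R :=
  err_comp (Num.max (TC_relerr_S gam bet alp K eps) (err_comp (dot_relerr K betn eps) eps))
    eps.

Section ToomCookRoundoff.
Variables (R : realFieldType) (nh no m : nat) (p : 'I_m -> R).
Variables (eps gam bet alp betn K : R).
Hypotheses (eps_ge0 : 0 <= eps) (alp_ge0 : 0 <= alp) (K_ge0 : 0 <= K).
Variables (F : R -> Prop) (fl_mul fl_add : R -> R -> R) (fdot : fdot_type R).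
(* [Set Implicit Arguments] would otherwise make the dimension argument of [fdot] implicit. *)
Arguments fdot : clear implicits.
Hypothesis fl_mul_err : forall y z, `|fl_mul y z - y * z| <= eps * `|y * z|.
Hypothesis fl_add_err : forall y z, `|fl_add y z - (y + z)| <= eps * `|y + z|.
Hypothesis F_fl_mul : forall y z, F (fl_mul y z).
Hypothesis dot_err_G : forall i, dot_err_bound F fdot eps K gam (row i (TC_G nh p)).
Hypothesis dot_err_BT : forall i, dot_err_bound F fdot eps K bet (row i (TC_BT p)).
Hypothesis dot_err_AT : forall i, dot_err_bound F fdot eps K alp (row i (TC_AT no p)).
Hypothesis dot_err_BTm : dot_err_bound F fdot eps K betn (row ord_max (TC_BTm p)).
Variables (h : 'cV[R]_nh) (x : 'cV[R]_m.+1).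
Hypotheses (F_h : forall j, F (h j 0)) (F_x : forall j, F (x j 0)).

Let z := hadc (TC_G nh p *m h) (TC_BT p *m xtrunc x).
Let Z := hadc (absm (TC_G nh p) *m absm h) (absm (TC_BT p) *m absm (xtrunc x)).
Let w := TC_w fdot fl_mul p h x.
Let bm := row ord_max (TC_BTm p).

Lemma fdot_err k c (a : 'rV[R]_k) (y : 'cV[R]_k) :
  dot_err_bound F fdot eps K c a -> (forall j, F (y j 0)) ->
  `|fdot k a y - (a *m y) 0 0| <= (absm a *m absm y) 0 0 * dot_relerr K c eps.
Proof. by move=> a_err F_y; rewrite distrC; apply: a_err. Qed.

Lemma TC_z_le i : `|z i 0| <= Z i 0.
Proof.
rewrite !hadcE -!(mulmx_row_entry _ _ i) -!absm_row normrM.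
by apply: ler_pM; rewrite ?normr_ge0 ?abs_dot.
Qed.

Lemma TC_w_err i :
  `|w i 0 - z i 0|
    <= Z i 0 * err_comp (err_comp (dot_relerr K gam eps) (dot_relerr K bet eps)) eps.
Proof.
have F_xt j : F (xtrunc x j 0) by rewrite mxE.
rewrite [w i 0]mxE !hadcE -!(mulmx_row_entry _ _ i) -!absm_row.
apply: approx_round eps_ge0 _ _ (fl_mul_err _ _).
  by rewrite normrM; apply: ler_pM; rewrite ?normr_ge0 ?abs_dot.
by apply: approx_mul; rewrite ?abs_dot ?fdot_err.
Qed.

Lemma TC_S_le q : `|(row q (TC_AT no p) *m z) 0 0| <= TC_mainterm p h x q.
Proof. exact: dot_le TC_z_le. Qed.

Lemma TC_mainterm_ge0 (q : 'I_no) : 0 <= TC_mainterm p h x q.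
Proof. exact: le_trans (normr_ge0 _) (TC_S_le q). Qed.

Lemma TC_last_weight_ge0 (hl : 'I_nh) : 0 <= `|h hl 0| * (absm bm *m absm x) 0 0.
Proof. by rewrite mulr_ge0 ?absm_mulmx_ge0 // => i j; apply: absm_ge0. Qed.

Lemma TC_S_err q :
  `|fdot _ (row q (TC_AT no p)) w - (row q (TC_AT no p) *m z) 0 0|
    <= TC_mainterm p h x q * TC_relerr_S gam bet alp K eps.
Proof.
have F_w j : F (w j 0) by rewrite mxE.
apply: (approx_trans (dot_approx _ TC_w_err)).
apply: le_trans (fdot_err (dot_err_AT q) F_w) _.
rewrite ler_wpM2r ?addr_ge0 ?mulr_ge0 ?exprn_ge0 //.
by apply: absdot_le_scale => i; apply: approx_norm_le (TC_z_le i) (TC_w_err i).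
Qed.

Lemma TC_shat_err_lt (hl : 'I_nh) (q : 'I_no) :
  (hl : nat) = nh.-1 -> ((q : nat) < no.-1)%N ->
  `|TC_shat fdot fl_mul fl_add p h x hl q - TC_exact no p h x q 0|
    <= TC_mainterm p h x q * TC_relerr_S gam bet alp K eps.
Proof.
move=> hl_last q_lt; rewrite /TC_shat q_lt (TC_exactE _ _ _ _ hl_last).
by rewrite ltn_eqF // mul0r addr0 TC_S_err.
Qed.

Lemma TC_last_product_err (hl : 'I_nh) :
  `|fl_mul (h hl 0) (fdot _ bm x) - h hl 0 * (bm *m x) 0 0|
    <= `|h hl 0| * (absm bm *m absm x) 0 0 * err_comp (dot_relerr K betn eps) eps.
Proof.
apply: approx_round eps_ge0 _ _ (fl_mul_err _ _).
  by rewrite normrM ler_wpM2l ?abs_dot.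
by rewrite -mulrBr normrM -mulrA ler_wpM2l ?fdot_err.
Qed.

Lemma TC_shat_err_last (hl : 'I_nh) (q : 'I_no) :
  (hl : nat) = nh.-1 -> (q : nat) = no.-1 ->
  `|TC_shat fdot fl_mul fl_add p h x hl q - TC_exact no p h x q 0|
    <= (TC_mainterm p h x q + `|h hl 0| * (absm bm *m absm x) 0 0)
       * TC_relerr_last gam bet alp betn K eps.
Proof.
move=> hl_last q_last.
rewrite /TC_shat (TC_exactE _ _ _ _ hl_last) q_last ltnn eqxx mul1r.
apply: approx_round eps_ge0 _ _ (fl_add_err _ _).
  apply: le_trans (ler_normD _ _) _; rewrite lerD ?TC_S_le //.
  by rewrite normrM ler_wpM2l ?abs_dot.
exact: approx_add (TC_mainterm_ge0 q) (TC_last_weight_ge0 hl) (TC_S_err q)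
  (TC_last_product_err hl).
Qed.

End ToomCookRoundoff.

Section RelativeErrorOrder.
Variables (R : realFieldType) (gam bet alp betn K : R).
Hypotheses (gam_ge0 : 0 <= gam) (bet_ge0 : 0 <= bet) (alp_ge0 : 0 <= alp)
  (betn_ge0 : 0 <= betn) (K_ge0 : 0 <= K).

Lemma TC_relerr_S_first_order :
  first_order_le (gam + bet + alp + 1) (TC_relerr_S gam bet alp K).
Proof.
have rounded_product := first_order_le_comp
  (first_order_le_comp (first_order_le_lin gam_ge0 K_ge0) (first_order_le_lin bet_ge0 K_ge0))
  first_order_le_id.
rewrite addrAC.
exact: first_order_le_comp rounded_product (first_order_le_lin alp_ge0 K_ge0).
Qed.

Lemma TC_relerr_last_first_order :
  first_order_le (Num.max (gam + bet + alp + 1) (betn + 1) + 1)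
    (TC_relerr_last gam bet alp betn K).
Proof.
have rounded_last_product :=
  first_order_le_comp (first_order_le_lin betn_ge0 K_ge0) first_order_le_id.
exact: first_order_le_comp
  (first_order_le_max TC_relerr_S_first_order rounded_last_product) first_order_le_id.
Qed.

End RelativeErrorOrder.

Theorem mainTheorem5 (R : realFieldType) (nh no : nat)
    (p : 'I_(no + nh - 2) -> R) (gam bet alp betn K : R) :
  (1 <= nh)%N -> (2 <= no)%N -> injective p ->
  0 <= gam -> 0 <= bet -> 0 <= alp -> 0 <= betn -> 0 <= K ->
  exists C eps0 : R, 0 < eps0 /\
  forall eps : R, 0 <= eps -> eps <= eps0 ->
  forall (F : R -> Prop) (fl_mul fl_add : R -> R -> R) (fdot : fdot_type R),
    (forall y z, `|fl_mul y z - y * z| <= eps * `|y * z|) ->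
    (forall y z, `|fl_add y z - (y + z)| <= eps * `|y + z|) ->
    (forall y z, F (fl_mul y z)) -> (forall y z, F (fl_add y z)) ->
    (forall k a y, F (fdot k a y)) ->
    (* the error constants gamma^(nh), beta^(n-1), alpha^(n-1), beta^(n) *)
    (forall i, dot_err_bound F fdot eps K gam (row i (TC_G nh p))) ->
    (forall i, dot_err_bound F fdot eps K bet (row i (TC_BT p))) ->
    (forall i, dot_err_bound F fdot eps K alp (row i (TC_AT no p))) ->
    dot_err_bound F fdot eps K betn (row ord_max (TC_BTm p)) ->
  forall (h : 'cV[R]_nh) (x : 'cV[R]_((no + nh - 2).+1)),
    (forall j, F (h j 0)) -> (forall j, F (x j 0)) ->
  forall hl : 'I_nh, (hl : nat) = nh.-1 ->
    (forall q : 'I_no, ((q : nat) < no.-1)%N ->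
      `|TC_shat fdot fl_mul fl_add p h x hl q - TC_exact no p h x q 0|
        <= TC_mainterm p h x q * ((gam + bet + alp + 1) * eps)
           + C * eps ^+ 2 * TC_mainterm p h x q) /\
    (forall q : 'I_no, (q : nat) = no.-1 ->
      let M := TC_mainterm p h x q
               + `|h hl 0| * (absm (row ord_max (TC_BTm p)) *m absm x) 0 0 in
      `|TC_shat fdot fl_mul fl_add p h x hl q - TC_exact no p h x q 0|
        <= M * ((Num.max (gam + bet + alp + 1) (betn + 1) + 1) * eps)
           + C * eps ^+ 2 * M).
Proof.
move=> _ _ _ gam_ge0 bet_ge0 alp_ge0 betn_ge0 K_ge0.
have [C first_order_bounds] := first_order_le_common
  (TC_relerr_S_first_order gam_ge0 bet_ge0 alp_ge0 K_ge0)
  (TC_relerr_last_first_order gam_ge0 bet_ge0 alp_ge0 betn_ge0 K_ge0).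
exists C, 1; split=> [|eps eps_ge0 eps_le1 F fl_mul fl_add fdot fl_mul_err fl_add_err
  F_fl_mul _ _ dot_err_G dot_err_BT dot_err_AT dot_err_BTm h x F_h F_x hl hl_last].
  exact: ltr01.
have [S_le last_le] := first_order_bounds eps (introT andP (conj eps_ge0 eps_le1)).
split=> [q q_lt | q q_last /=].
  apply: le_trans (TC_shat_err_lt eps_ge0 alp_ge0 K_ge0 fl_add fl_mul_err F_fl_mul
    dot_err_G dot_err_BT dot_err_AT F_h F_x hl_last q_lt) _.
  by rewrite [C * _ * _]mulrC -mulrDr ler_wpM2l ?TC_mainterm_ge0.
apply: le_trans (TC_shat_err_last eps_ge0 alp_ge0 K_ge0 fl_mul_err fl_add_err F_fl_mul
  dot_err_G dot_err_BT dot_err_AT dot_err_BTm F_h F_x hl_last q_last) _.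
rewrite [C * _ * _]mulrC -mulrDr ler_wpM2l //.
by rewrite addr_ge0 ?TC_mainterm_ge0 ?TC_last_weight_ge0.
Qed.
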